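(* Let $\pi>0$, $\bar d>0$, $c\ge0$, $0<\theta_1<\dots<\theta_K$, $0\le\beta_1<\dots<\beta_M\le1$, $A:[0,D]\to[0,\bar d]$ continuously differentiable and decreasing, and $J$ an increasing function. Let $L(Q,\beta,\theta)=\theta[\bar d-\beta A(Q)]-\pi(1-\beta)A(Q)$, $\bar S(Q,\Pi,\Lambda)=L(Q,\Lambda)-\Pi$, $\sigma(Q,\beta,\theta)=-[\theta\beta+\pi(1-\beta)]A'(Q)$, $P(Q,\beta)=\pi(1-\beta)A(Q)$, $U(Q,\beta)=\bar d-\beta A(Q)$. Enumerate the $KM$ types as $\Lambda_1,\dots,\Lambda_{KM}$ with $\sigma(Q,\Lambda_1)\le\dots\le\sigma(Q,\Lambda_{KM})$, let $q(\Lambda_i)\ge0$ be the probability of type $\Lambda_i$, and let $\epsilon$ be an index with $\bar S(Q,\Pi,\Lambda_\epsilon)\le\bar S(Q,\Pi,\Lambda_i)$ for all $i$ and all $(Q,\Pi)$. Put $\eta^-(\Lambda_i,Q_i,Q_{i-1})=L(Q_i,\Lambda_i)-L(Q_{i-1},\Lambda_i)$ and $\eta^+(\Lambda_i,Q_i,Q_{i+1})=L(Q_i,\Lambda_i)-L(Q_{i+1},\Lambda_i)$. Fix data caps $\bm Q=(Q_1,\dots,Q_{KM})$ with $0\le Q_1\le\dots\le Q_{KM}\le D$ and consider the problem of choosing $\Pi_1,\dots,\Pi_{KM}\in\mathbb{R}$ to maximize $$\sum_{i=1}^{KM}q(\Lambda_i)\big[\Pi_i+P(Q_i,\Lambda_i)-c\,U(Q_i,\Lambda_i)-J(Q_i)\big]$$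 subject to: $\Pi_\epsilon\le L(Q_\epsilon,\Lambda_\epsilon)$; for $i=1,\dots,\epsilon-1$: $\Pi_i\le\Pi_{i+1}+\eta^+(\Lambda_i,Q_i,Q_{i+1})$ and $\Pi_i\ge\Pi_{i+1}-\eta^-(\Lambda_{i+1},Q_{i+1},Q_i)$; for $i=\epsilon+1,\dots,KM$: $\Pi_i\le\Pi_{i-1}+\eta^-(\Lambda_i,Q_i,Q_{i-1})$ and $\Pi_i\ge\Pi_{i-1}-\eta^+(\Lambda_{i-1},Q_{i-1},Q_i)$. Then the optimal prices are given by $$\Pi^*_\epsilon(\bm Q)=L(Q_\epsilon,\Lambda_\epsilon),\quad \Pi^*_i(\bm Q)=\Pi^*_{i+1}(\bm Q)+\eta^+(\Lambda_i,Q_i,Q_{i+1})\ (i<\epsilon),\quad \Pi^*_i(\bm Q)=\Pi^*_{i-1}(\bm Q)+\eta^-(\Lambda_i,Q_i,Q_{i-1})\ (i>\epsilon).$$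
   Context: Model: a mobile network operator offers one item (data cap $Q_i$, subscription fee $\Pi_i$) for each user type $\Lambda_i=(\beta,\theta)$ (network substitutability $\beta$, data valuation $\theta$); $\pi$ is the overage price, $\bar d$ the mean demand, $A(Q)$ the expected overage consumption under cap $Q$ (decreasing, convex). The objective is the operator's expected profit: subscription plus overage revenue $P$, minus operational cost $c\,U$ ($U$ = expected consumption) and capacity cost $J$. The constraints are sufficient conditions for individual rationality and incentive compatibility. $\sigma$ is the willingness-to-pay, $\Lambda_\epsilon$ the smallest-payoff type. *)

(* R : realType. Types Lambda = (beta, theta) : R * R. *)
From HB Require Import structures.
From mathcomp Require Import all_boot all_order all_algebra.
From mathcomp Require Import all_classical all_reals all_analysis.
Set Implicit Arguments. Unset Strict Implicit. Unset Printing Implicit Defensive.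
Import Order.TTheory GRing.Theory Num.Theory.
Local Open Scope ring_scope.

Section Model.
Variables (R : realType) (pi dbar : R) (A : R -> R).

Definition Lfun (Q : R) (Lam : R * R) : R :=
  Lam.2 * (dbar - Lam.1 * A Q) - pi * (1 - Lam.1) * A Q.

Definition Sbar (Q Pi : R) (Lam : R * R) : R := Lfun Q Lam - Pi.

Definition Pover (Q : R) (Lam : R * R) : R := pi * (1 - Lam.1) * A Q.

Definition Ucons (Q : R) (Lam : R * R) : R := dbar - Lam.1 * A Q.

Definition eta_minus (Lam : R * R) (Qi Qprev : R) : R := Lfun Qi Lam - Lfun Qprev Lam.
Definition eta_plus (Lam : R * R) (Qi Qnext : R) : R := Lfun Qi Lam - Lfun Qnext Lam.

(* Constraints of the pricing problem (0-based indices: paper index i is i-1 here,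
   eps is the 0-based index of Lambda_epsilon, n = K M). *)
Definition feasible (n eps : nat) (Lam : nat -> R * R) (Q Pi : nat -> R) : Prop :=
  Pi eps <= Lfun (Q eps) (Lam eps) /\
  (forall i, (i < eps)%N ->
     Pi i <= Pi i.+1 + eta_plus (Lam i) (Q i) (Q i.+1) /\
     Pi i >= Pi i.+1 - eta_minus (Lam i.+1) (Q i.+1) (Q i)) /\
  (forall i, (eps < i)%N -> (i < n)%N ->
     Pi i <= Pi i.-1 + eta_minus (Lam i) (Q i) (Q i.-1) /\
     Pi i >= Pi i.-1 - eta_plus (Lam i.-1) (Q i.-1) (Q i)).

Definition profit (n : nat) (c : R) (J : R -> R) (q : nat -> R)
    (Lam : nat -> R * R) (Q Pi : nat -> R) : R :=
  \sum_(i < n) q i * (Pi i + Pover (Q i) (Lam i) - c * Ucons (Q i) (Lam i) - J (Q i)).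

Definition opt_prices (n eps : nat) (Lam : nat -> R * R) (Q Pst : nat -> R) : Prop :=
  Pst eps = Lfun (Q eps) (Lam eps) /\
  (forall i, (i < eps)%N -> Pst i = Pst i.+1 + eta_plus (Lam i) (Q i) (Q i.+1)) /\
  (forall i, (eps < i)%N -> (i < n)%N -> Pst i = Pst i.-1 + eta_minus (Lam i) (Q i) (Q i.-1)).

End Model.

Definition sigma (R : realType) (pi : R) (dA : R -> R) (Q : R) (Lam : R * R) : R :=
  - ((Lam.2 * Lam.1 + pi * (1 - Lam.1)) * dA Q).

(* Only the upper-bound constraints can bind.  Walking outward from the
   smallest-payoff type eps, every feasible price is bounded by the price
   obtained when all upper constraints are tight, so these prices dominate any
   feasible price vector and hence maximise the (nonnegatively weighted)
   profit.  They are themselves feasible because the two incentive constraints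
   between neighbours i, i+1 leave a gap
     eta+ + eta- = (w_(i+1) - w_i) (A(Q_i) - A(Q_(i+1))),
   where sigma = - w A'; sorting by sigma makes this gap nonnegative: either
   w_i <= w_(i+1), or A' >= 0 on [0, D], so the decreasing A is constant there. *)
From Pilot Require Import Defs.
From HB Require Import structures.
From mathcomp Require Import all_boot all_order all_algebra.
From mathcomp Require Import all_classical all_reals all_analysis.
From mathcomp Require Import ring lra zify.
Set Implicit Arguments. Unset Strict Implicit. Unset Printing Implicit Defensive.
Import Order.TTheory GRing.Theory Num.Theory.
Import numFieldNormedType.Exports.
Local Open Scope classical_set_scope.
Local Open Scope ring_scope.

Definition wtp_weight (R : realType) (pi : R) (Lam : R * R) : R :=
  Lam.2 * Lam.1 + pi * (1 - Lam.1).

Lemma sigmaE (R : realType) (pi : R) (dA : R -> R) (Q : R) (Lam : R * R) :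
  sigma pi dA Q Lam = - (wtp_weight pi Lam * dA Q).
Proof. by []. Qed.

Lemma eta_plus_minus (R : realType) (pi dbar : R) (A : R -> R)
    (Lam Lam' : R * R) (Qa Qb : R) :
  eta_plus pi dbar A Lam Qa Qb + eta_minus pi dbar A Lam' Qb Qa =
  (wtp_weight pi Lam' - wtp_weight pi Lam) * (A Qa - A Qb).
Proof. by rewrite /eta_plus /eta_minus /Defs.Lfun /wtp_weight; ring. Qed.

Lemma ge0_weight_gap_nincr (R : realType) (D : R) (A dA : R -> R) (w w' x y : R) :
  {within [set x | 0 <= x <= D], continuous A} ->
  {in `]0, D[, forall x, is_derive x (1 : R) A (dA x)} ->
  {in `[0, D] &, forall x y, x <= y -> A y <= A x} ->
  (forall v, 0 <= v <= D -> - (w * dA v) <= - (w' * dA v)) ->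
  0 <= x <= D -> 0 <= y <= D -> x <= y ->
  0 <= (w' - w) * (A x - A y).
Proof.
move=> cA dAdA Anincr le_sigma x0D y0D xy.
have x_in : x \in `[0, D] by rewrite in_itv.
have y_in : y \in `[0, D] by rewrite in_itv.
have Ayx : A y <= A x by exact: Anincr.
have [ww'|w'w] := leP w w'; first by apply: mulr_ge0; lra.
have dA_ge0 : forall v, v \in `]0, D[ -> 0 <= derive1 A v.
  move=> v v_in; have := dAdA v v_in; rewrite derive1E => dAv; rewrite derive_val.
  have /le_sigma : 0 <= v <= D by move: v_in; rewrite in_itv /= => /andP[]; lra.
  move=> le_v; have : 0 <= (w - w') * dA v by lra.
  by rewrite pmulr_rge0 ?subr_gt0.
have Axy : A x <= A y.
  by apply: (ger0_derive1_le_cc _ dA_ge0) => // v /dAdA [].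
have -> : A x - A y = 0 by lra.
by rewrite mulr0.
Qed.

Lemma ler_profit (R : realType) (pi dbar c : R) (A J : R -> R) (n : nat)
    (q : nat -> R) (Lam : nat -> R * R) (Q Pi Pi' : nat -> R) :
  (forall i, (i < n)%N -> 0 <= q i) -> (forall i, (i < n)%N -> Pi i <= Pi' i) ->
  profit pi dbar A n c J q Lam Q Pi <= profit pi dbar A n c J q Lam Q Pi'.
Proof.
move=> q_ge0 le_Pi; apply: ler_sum => i _.
by rewrite ler_wpM2l ?q_ge0 // !lerD2r le_Pi.
Qed.

Section Pricing.
Variables (R : realType) (pi dbar : R) (A : R -> R).
Variables (n eps : nat) (Lam : nat -> R * R) (Q : nat -> R).

Local Notation L := (Defs.Lfun pi dbar A).
Local Notation etaP := (eta_plus pi dbar A).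
Local Notation etaM := (eta_minus pi dbar A).

Lemma opt_prices_exist : exists Pst, opt_prices pi dbar A n eps Lam Q Pst.
Proof.
pose L0 := L (Q eps) (Lam eps).
exists (fun i => if (i <= eps)%N then L0 + \sum_(i <= j < eps) etaP (Lam j) (Q j) (Q j.+1)
                 else L0 + \sum_(eps.+1 <= j < i.+1) etaM (Lam j) (Q j) (Q j.-1)).
split; first by rewrite leqnn big_geq ?addr0.
split=> [i lt_i_eps | [//|i] lt_eps_i _].
  by rewrite ltnW // lt_i_eps big_ltn //; ring.
rewrite leqNgt lt_eps_i big_nat_recr //=.
case: leqP => [le_i_eps | _]; last by rewrite addrA.
have -> : i = eps by lia.
by rewrite big_geq // big_geq // addr0 add0r.
Qed.

Lemma feasible_le_opt_prices (Pst Pi : nat -> R) :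
  opt_prices pi dbar A n eps Lam Q Pst -> feasible pi dbar A n eps Lam Q Pi ->
  forall i, (i < n)%N -> Pi i <= Pst i.
Proof.
move=> [Pst_eps [Pst_lo Pst_hi]] [Pi_eps [Pi_lo Pi_hi]].
have below : forall k, (k <= eps)%N -> Pi (eps - k)%N <= Pst (eps - k)%N.
  elim=> [|k IHk] le_k; first by rewrite subn0 Pst_eps.
  have lt_k : (eps - k.+1 < eps)%N by lia.
  have eps_k : (eps - k.+1).+1 = (eps - k)%N by lia.
  have [le_Pi _] := Pi_lo _ lt_k.
  rewrite Pst_lo //; apply: (le_trans le_Pi).
  by rewrite lerD2r eps_k; apply: IHk; apply: ltnW.
have above : forall k, (eps + k < n)%N -> Pi (eps + k)%N <= Pst (eps + k)%N.
  elim=> [|k IHk] lt_k; first by rewrite addn0 Pst_eps.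
  have gt_k : (eps < eps + k.+1)%N by lia.
  have eps_k : (eps + k.+1).-1 = (eps + k)%N by lia.
  have [le_Pi _] := Pi_hi _ gt_k lt_k.
  rewrite Pst_hi //; apply: (le_trans le_Pi).
  by rewrite lerD2r eps_k; apply: IHk; lia.
move=> i lt_i; have [le_i_eps | lt_eps_i] := leqP i eps.
  by have := below (eps - i)%N (leq_subr _ _); rewrite subKn.
have := above (i - eps)%N; rewrite subnKC ?(ltnW lt_eps_i) //.
by apply.
Qed.

Hypothesis lt_eps_n : (eps < n)%N.
Hypothesis ge0_eta_gap : forall j, (j.+1 < n)%N ->
  0 <= etaP (Lam j) (Q j) (Q j.+1) + etaM (Lam j.+1) (Q j.+1) (Q j).

Lemma opt_prices_feasible (Pst : nat -> R) :
  opt_prices pi dbar A n eps Lam Q Pst -> feasible pi dbar A n eps Lam Q Pst.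
Proof.
move=> [Pst_eps [Pst_lo Pst_hi]].
split; first by rewrite Pst_eps.
split=> [i lt_i_eps | [//|i] lt_eps_i lt_i_n].
  have := ge0_eta_gap (leq_ltn_trans lt_i_eps lt_eps_n).
  by rewrite Pst_lo //; split; lra.
have := ge0_eta_gap lt_i_n.
by rewrite Pst_hi //=; split; lra.
Qed.

End Pricing.

Theorem theorem3 (R : realType) (pi dbar c D : R) (K M : nat)
  (theta : 'I_K -> R) (beta : 'I_M -> R)
  (A dA J : R -> R) (Lam : nat -> R * R) (q : nat -> R) (eps : nat) (Q : nat -> R) :
  0 < pi -> 0 < dbar -> 0 <= c ->
  (forall k, 0 < theta k) -> {homo theta : k l / (k < l)%N >-> k < l} ->
  (forall m, 0 <= beta m <= 1) -> {homo beta : m l / (m < l)%N >-> m < l} ->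
  (* A : [0,D] -> [0,dbar], continuously differentiable (derivative dA), decreasing *)
  {in `[0, D], forall x, 0 <= A x <= dbar} ->
  {within [set x | 0 <= x <= D], continuous A} ->
  {in `]0, D[, forall x, is_derive x (1 : R) A (dA x)} ->
  {within [set x | 0 <= x <= D], continuous dA} ->
  {in `[0, D] &, forall x y, x <= y -> A y <= A x} ->
  (* J increasing *)
  {in `[0, D] &, forall x y, x <= y -> J x <= J y} ->
  (* Lam enumerates the K*M types (beta_m, theta_k) bijectively *)
  (forall i, (i < K * M)%N -> exists k m, Lam i = (beta m, theta k)) ->
  (forall k m, exists i, (i < K * M)%N /\ Lam i = (beta m, theta k)) ->
  (* ordering by willingness-to-pay *)
  (forall Qv, 0 <= Qv <= D -> forall i, (i.+1 < K * M)%N ->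
     sigma pi dA Qv (Lam i) <= sigma pi dA Qv (Lam i.+1)) ->
  (* type probabilities *)
  (forall i, (i < K * M)%N -> 0 <= q i) -> \sum_(i < K * M) q i = 1 ->
  (* smallest-payoff type *)
  (eps < K * M)%N ->
  (forall Qv Piv, 0 <= Qv <= D -> forall i, (i < K * M)%N ->
     Sbar pi dbar A Qv Piv (Lam eps) <= Sbar pi dbar A Qv Piv (Lam i)) ->
  (* data caps *)
  (forall i, (i < K * M)%N -> 0 <= Q i <= D) ->
  (forall i, (i.+1 < K * M)%N -> Q i <= Q i.+1) ->
  (exists Pst, opt_prices pi dbar A (K * M) eps Lam Q Pst) /\
  (forall Pst, opt_prices pi dbar A (K * M) eps Lam Q Pst ->
     feasible pi dbar A (K * M) eps Lam Q Pst /\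
     forall Pi, feasible pi dbar A (K * M) eps Lam Q Pi ->
       profit pi dbar A (K * M) c J q Lam Q Pi <= profit pi dbar A (K * M) c J q Lam Q Pst).
Proof.
move=> _ _ _ _ _ _ _ _ cA dA_deriv _ A_nincr _ _ _ sigma_sorted q_ge0 _ lt_eps_n _ Q_in Q_sorted.
have eta_gap : forall j, (j.+1 < K * M)%N ->
    0 <= eta_plus pi dbar A (Lam j) (Q j) (Q j.+1)
         + eta_minus pi dbar A (Lam j.+1) (Q j.+1) (Q j).
  move=> j lt_j; rewrite eta_plus_minus.
  apply: (ge0_weight_gap_nincr cA dA_deriv A_nincr); last exact: Q_sorted.
  - by move=> v v_in; rewrite -!sigmaE; exact: sigma_sorted.
  - exact/Q_in/ltnW.
  - exact: Q_in.
split; first exact: opt_prices_exist.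
move=> Pst opt_Pst; split; first exact: opt_prices_feasible.
move=> Pi feas_Pi; apply: ler_profit => //.
exact: feasible_le_opt_prices opt_Pst feas_Pi.
Qed.
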